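(* Let $(V_i)_{i\ge1}$ be real-valued random variables such that $\mu(0,x):=\mathbb{E}\sum_i\mathbf{1}_{\{0<V_i<x\}}$ satisfies $\limsup_{x\downarrow0}\mu(0,x)/x<\infty$. Then there exist $\beta>0$ and $s_0>0$ such that for every sequence of events $A_i\subseteq\{V_i>0\}$ with $s:=\sum_i\mathbb{P}(A_i)\le s_0$, \[ \mathbb{E}\sum_i V_i\mathbf{1}_{A_i}\ \ge\ \beta s^2 . \] *)

From HB Require Import structures.
From mathcomp Require Import all_boot all_order all_algebra.
From mathcomp Require Export all_classical all_reals all_analysis.
Set Implicit Arguments. Unset Strict Implicit. Unset Printing Implicit Defensive.
Import Order.TTheory GRing.Theory Num.Theory.
Local Open Scope classical_set_scope.
Local Open Scope ring_scope.

Definition mu0 (d : measure_display) (T : measurableType d) (R : realType)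
  (P : probability T R) (V : nat -> {RV P >-> R}) (x : R) : \bar R :=
  (\int[P]_t (\sum_(0 <= i <oo) (\1_[set u | 0 < V i u < x] t)%:E))%E.

Definition EsumVA (d : measure_display) (T : measurableType d) (R : realType)
  (P : probability T R) (V : nat -> {RV P >-> R}) (A : nat -> set T) : \bar R :=
  (\int[P]_t (\sum_(0 <= i <oo) ((V i t)%:E * (\1_(A i) t)%:E)))%E.

From HB Require Import structures.
From mathcomp Require Import all_boot all_order all_algebra.
From mathcomp Require Import all_classical all_reals all_analysis.
From mathcomp Require Import measurable_realfun.
From mathcomp Require Import ring lra.
Set Implicit Arguments. Unset Strict Implicit. Unset Printing Implicit Defensive.
Import Order.TTheory GRing.Theory Num.Theory.
Local Open Scope classical_set_scope.
Local Open Scope ring_scope.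

(* For every x > 0 and every t, [x 1_{A_i} <= V_i 1_{A_i} + x 1_{0 < V_i < x}]
   because A_i sits inside {V_i > 0}.  Summing and integrating gives
   [x s <= E + x mu(0,x) <= E + C x^2]; the choice [x = s / (2C)] then yields
   [E >= s^2 / (4C)]. *)

Lemma mul_indic_ge0 (T : Type) (R : realDomainType) (f : T -> R) (A : set T)
    (t : T) :
  A `<=` [set u | 0 < f u] -> 0 <= f t * \1_A t.
Proof.
move=> Af; rewrite indicE; have [/set_mem/Af/ltW/= ft0|_] := boolP (t \in A).
  by rewrite mulr1.
by rewrite mulr0.
Qed.

Lemma scale_indic_le (T : Type) (R : realDomainType) (f : T -> R)
    (A : set T) (x : R) (t : T) :
  0 <= x -> A `<=` [set u | 0 < f u] ->
  x * \1_A t <= f t * \1_A t + x * \1_[set u | 0 < f u < x] t.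
Proof.
move=> x0 Af; rewrite !indicE.
have [/set_mem/Af/= ft0|_] := boolP (t \in A); last first.
  by rewrite !mulr0 add0r mulr_ge0 // ler0n.
rewrite !mulr1; have [/set_mem/= fx|] := boolP (t \in _).
  by rewrite mulr1 lerDr ltW.
rewrite notin_setE /= ft0 /= => /negP; rewrite -leNgt => xf.
by rewrite mulr0 addr0.
Qed.

Local Open Scope ereal_scope.

Lemma integral_sum_indic d (T : measurableType d) (R : realType)
    (mu : {measure set T -> \bar R}) (A : nat -> set T) :
  (forall i, measurable (A i)) ->
  \sum_(0 <= i <oo) mu (A i) =
    \int[mu]_t \sum_(0 <= i <oo) (\1_(A i) t)%:E.
Proof.
move=> mA; rewrite integral_nneseries //.
- by apply: eq_eseriesr => i _; rewrite integral_indic // setIT.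
- by move=> i; apply/measurable_EFinP; exact: measurable_indic.
Qed.

Lemma ge0_integral_scale_le_add d (T : measurableType d) (R : realType)
    (mu : {measure set T -> \bar R}) (f g h : T -> \bar R) (x : R) :
  (0 <= x)%R ->
  measurable_fun setT f -> measurable_fun setT g -> measurable_fun setT h ->
  (forall t, 0 <= f t) -> (forall t, 0 <= g t) -> (forall t, 0 <= h t) ->
  (forall t, x%:E * f t <= g t + x%:E * h t) ->
  x%:E * \int[mu]_t f t <= \int[mu]_t g t + x%:E * \int[mu]_t h t.
Proof.
move=> x0 mf mg mh f0 g0 h0 fgh.
rewrite -!ge0_integralZl_EFin // -ge0_integralD //.
- apply: ge0_le_integral => //.
  + by move=> t _; apply: mule_ge0; rewrite ?lee_fin.
  + exact: measurable_funeM.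
  + by apply: emeasurable_funD => //; exact: measurable_funeM.
- by move=> t _; apply: mule_ge0; rewrite ?lee_fin.
- exact: measurable_funeM.
Qed.

Section markov_type_bound.
Context d (T : measurableType d) (R : realType) (P : probability T R)
  (V : nat -> {RV P >-> R}).

Lemma measurable_RV_between (X : {RV P >-> R}) (a b : R) :
  measurable [set t | (a < X t < b)%R].
Proof.
have -> : [set t | (a < X t < b)%R] = X @^-1` `]a, b[.
  by apply/seteqP; split => t /=; rewrite in_itv.
exact: measurable_funPTI.
Qed.

Lemma EsumVA_ge0 (A : nat -> set T) :
  (forall i, A i `<=` [set t | (0 < V i t)%R]) -> 0 <= EsumVA V A.
Proof.
move=> AV; apply: integral_ge0 => t _; apply: nneseries_ge0 => i _ _.
by rewrite -EFinM lee_fin mul_indic_ge0.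
Qed.

Lemma sum_measure_le_EsumVA_mu0 (x : R) (A : nat -> set T) : (0 < x)%R ->
  (forall i, measurable (A i)) ->
  (forall i, A i `<=` [set t | (0 < V i t)%R]) ->
  x%:E * (\sum_(0 <= i <oo) P (A i)) <= EsumVA V A + x%:E * mu0 V x.
Proof.
move=> /ltW x0 mA AV; rewrite integral_sum_indic // /EsumVA /mu0.
set IA := fun t => \sum_(0 <= i <oo) (\1_(A i) t)%:E.
set IB := fun t => \sum_(0 <= i <oo) (\1_[set u | (0 < V i u < x)%R] t)%:E.
set VA := fun t => \sum_(0 <= i <oo) ((V i t)%:E * (\1_(A i) t)%:E).
have mIA : measurable_fun setT IA.
  apply: ge0_emeasurable_sum => [k t _ _|k _]; first by rewrite lee_fin.
  by apply/measurable_EFinP; exact: measurable_indic.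
have mIB : measurable_fun setT IB.
  apply: ge0_emeasurable_sum => [k t _ _|k _]; first by rewrite lee_fin.
  by apply/measurable_EFinP; apply: measurable_indic; exact: measurable_RV_between.
have mVA : measurable_fun setT VA.
  apply: ge0_emeasurable_sum => [k t _ _|k _].
    by rewrite -EFinM lee_fin mul_indic_ge0.
  apply: emeasurable_funM; apply/measurable_EFinP; first exact: measurable_funP.
  exact: measurable_indic.
have IA0 t : 0 <= IA t by apply: nneseries_ge0 => i _ _; rewrite lee_fin.
have IB0 t : 0 <= IB t by apply: nneseries_ge0 => i _ _; rewrite lee_fin.
have VA0 t : 0 <= VA t.
  by apply: nneseries_ge0 => i _ _; rewrite -EFinM lee_fin mul_indic_ge0.
have pointwise t : x%:E * IA t <= VA t + x%:E * IB t.
  rewrite /IA /IB /VA -!nneseriesZl; [|by move=> i _; rewrite lee_fin..].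
  rewrite -nneseriesD => [|i _ _|i _ _]; rewrite -?EFinM ?lee_fin.
  - apply: lee_nneseries => [i _ _|i _]; rewrite -?EFinM ?lee_fin.
      by rewrite mulr_ge0.
    exact: scale_indic_le.
  - exact: mul_indic_ge0 (AV i).
  - by rewrite mulr_ge0.
exact: ge0_integral_scale_le_add.
Qed.

Lemma EsumVA_ge_linear_minus_quadratic (C x : R) (A : nat -> set T) :
  (0 < x)%R -> mu0 V x <= (C * x)%:E ->
  (forall i, measurable (A i)) ->
  (forall i, A i `<=` [set t | (0 < V i t)%R]) ->
  x%:E * (\sum_(0 <= i <oo) P (A i)) - (C * x * x)%:E <= EsumVA V A.
Proof.
move=> x0 muC mA AV; rewrite leeBlDr //.
apply: le_trans (sum_measure_le_EsumVA_mu0 x0 mA AV) _.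
by apply: leeD2l; rewrite [(C * x * x)%R]mulrC EFinM; apply: lee_wpmul2l; rewrite // lee_fin ltW.
Qed.

End markov_type_bound.

Local Close Scope ereal_scope.

Theorem mainTheorem5 (d : measure_display) (T : measurableType d) (R : realType)
  (P : probability T R) (V : nat -> {RV P >-> R}) :
  (* limsup_{x -> 0+} mu(0,x)/x < +oo *)
  (exists C : R, exists2 delta : R, 0 < delta &
     forall x : R, 0 < x -> x < delta -> (mu0 V x <= (C * x)%:E)%E) ->
  exists beta : R, exists s0 : R, [/\ 0 < beta, 0 < s0 &
    forall A : nat -> set T,
      (forall i, measurable (A i)) ->
      (forall i, A i `<=` [set t | 0 < V i t]) ->
      let s := (\sum_(0 <= i <oo) P (A i))%E in
      (s <= s0%:E)%E ->
      (beta%:E * s * s <= EsumVA V A)%E].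
Proof.
move=> [C [delta delta_gt0 muC]].
pose c := Num.max C 1.
have c_gt0 : 0 < c by rewrite lt_max ltr01 orbT.
have muc x : 0 < x -> x < delta -> (mu0 V x <= (c * x)%:E)%E.
  move=> x0 xd; apply: le_trans (muC x x0 xd) _.
  by rewrite lee_fin ler_pM2r // le_max lexx.
exists (4 * c)^-1, (c * delta); split; [by rewrite invr_gt0 mulr_gt0|exact: mulr_gt0|].
move=> A mA AV s s_le.
have s_ge0 : (0 <= s)%E by apply: nneseries_ge0 => i _ _.
have s_fin : s \is a fin_num by rewrite ge0_fin_numE // (le_lt_trans s_le) ?ltry.
have s_r : s = (fine s)%:E by rewrite fineK.
rewrite s_r in s_ge0 s_le *.
move: (fine s) s_r s_ge0 s_le => r s_r; rewrite !lee_fin le_eqVlt => /predU1P[<- _|r_gt0 r_le].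
  by rewrite !mule0 EsumVA_ge0.
(* the minimiser of [x |-> c x^2 - x r] *)
pose x := r / (2 * c).
have x_gt0 : 0 < x by rewrite divr_gt0 // mulr_gt0.
have x_lt : x < delta by rewrite ltr_pdivrMr ?mulr_gt0 //; nra.
have := EsumVA_ge_linear_minus_quadratic x_gt0 (muc x x_gt0 x_lt) mA AV.
rewrite -/s s_r -EFinM -EFinB -!EFinM.
suff -> : x * r - c * x * x = (4 * c)^-1 * r * r by [].
by rewrite /x; field; rewrite gt_eqF.
Qed.
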